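(* Let $T=\mathrm{diag}(t_1,t_2,t_3)$ be a real diagonal matrix with $t_1t_2t_3\neq0$, and define $N_T>0$ by $N_T^{-1}=\int_{S^2}(\boldsymbol n^\intercal T^{-2}\boldsymbol n)^{-2}\,\mathrm{d}^2\boldsymbol n$. Then \[ N_T\,|\det T|\int_{S^2}\sqrt{\boldsymbol n^\intercal T^{2}\boldsymbol n}\;\mathrm{d}^2\boldsymbol n = 1 . \] Consequently, $2\pi N_T|\det T|=1$ holds if and only if $\int_{S^2}\sqrt{\boldsymbol n^\intercal T^{2}\boldsymbol n}\,\mathrm{d}^2\boldsymbol n=2\pi$.
   Context: $S^2$ is the unit sphere in $\mathbb{R}^3$ with its standard surface measure $\mathrm{d}^2\boldsymbol n$. *)

From Stdlib Require Import Reals Lra.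
Open Scope R_scope.

Definition has_integral (f : R -> R) (a b v : R) : Prop :=
  exists pr : Riemann_integrable f a b, RiemannInt pr = v.

Definition sph_x (th ph : R) : R := sin th * cos ph.
Definition sph_y (th ph : R) : R := sin th * sin ph.
Definition sph_z (th ph : R) : R := cos th.

(* Surface integral over S^2 w.r.t. the standard surface measure
   d^2 n = sin(theta) dphi dtheta :
   sphere_integral f I  <->  int_0^pi ( int_0^{2pi} f(n(th,ph)) dph ) sin th dth = I,
   both integrals being (proper) Riemann integrals. *)
Definition sphere_integral (f : R -> R -> R -> R) (I : R) : Prop :=
  exists g : R -> R,
    (forall th, 0 <= th <= PI ->
       has_integral (fun ph => f (sph_x th ph) (sph_y th ph) (sph_z th ph)) 0 (2 * PI) (g th))
    /\ has_integral (fun th => g th * sin th) 0 PI I.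

Definition quadT2 (t1 t2 t3 x y z : R) : R :=
  t1 ^ 2 * x ^ 2 + t2 ^ 2 * y ^ 2 + t3 ^ 2 * z ^ 2.
Definition quadTm2 (t1 t2 t3 x y z : R) : R :=
  x ^ 2 / t1 ^ 2 + y ^ 2 / t2 ^ 2 + z ^ 2 / t3 ^ 2.

Definition absdetT (t1 t2 t3 : R) : R := Rabs (t1 * t2 * t3).

From Coquelicot Require Import Coquelicot.
From Stdlib Require Import Reals Lra Psatz.
Open Scope R_scope.

(* Substitute n = S m / |S m| on the sphere, with S = diag(|t1|, |t2|, |t3|).
   This map has Jacobian det S / |S m|^3 and turns n^T T^-2 n into 1 / |S m|^2,
   so the integrand (n^T T^-2 n)^-2 becomes det S |S m| = |det T| (m^T T^2 m)^(1/2).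
   In spherical coordinates the map is a composite of two planar substitutions,
   phi |-> angle of (|t1| cos phi, |t2| sin phi), then
   theta |-> angle of (|t3| cos theta, rho sin theta) with rho = |(|t1| cos phi, |t2| sin phi)|;
   both fix the endpoints of their ranges, and Fubini for continuous integrands lets
   each act on a one-variable Riemann integral. *)

Lemma sin2_cos2_pow x : sin x ^ 2 + cos x ^ 2 = 1.
Proof. rewrite <- (sin2_cos2 x); unfold Rsqr; ring. Qed.

Lemma cos2_sin2_comb_pos a b x : 0 < a -> 0 < b -> 0 < a * cos x ^ 2 + b * sin x ^ 2.
Proof.
  intros ha hb; pose proof (sin2_cos2_pow x).
  destruct (Rle_lt_dec a b); nra.
Qed.

Definition ellipse_r2 (p q x : R) : R := p ^ 2 * cos x ^ 2 + q ^ 2 * sin x ^ 2.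

(* The polar angle of (p cos x, q sin x), written as x plus a correction whose
   tangent is given explicitly, so that it is a smooth function of x. *)
Definition ellipse_angle (p q x : R) : R :=
  x + atan ((q - p) * sin x * cos x / (p * cos x ^ 2 + q * sin x ^ 2)).

Lemma ellipse_r2_ge_0 p q x : 0 <= ellipse_r2 p q x.
Proof. unfold ellipse_r2; nra. Qed.

Lemma ellipse_r2_pos p q x : 0 < p -> 0 < q -> 0 < ellipse_r2 p q x.
Proof. intros; apply cos2_sin2_comb_pos; nra. Qed.

Lemma ellipse_angle_sin_0 p q a : sin a = 0 -> ellipse_angle p q a = a.
Proof.
  intros h; unfold ellipse_angle; rewrite h.
  replace ((q - p) * 0 * cos a / (p * cos a ^ 2 + q * 0 ^ 2)) with 0
    by (unfold Rdiv; ring).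
  rewrite atan_0; ring.
Qed.

Section EllipseAngle.
Variables p q : R.
Hypotheses (hp : 0 < p) (hq : 0 < q).

Let den x := p * cos x ^ 2 + q * sin x ^ 2.
Let corr x := (q - p) * sin x * cos x / den x.

Lemma sqrt_1_plus_corr2 x : sqrt (1 + (corr x)²) = sqrt (ellipse_r2 p q x) / den x.
Proof.
  assert (hd : 0 < den x) by now apply cos2_sin2_comb_pos.
  replace (1 + (corr x)²) with (ellipse_r2 p q x / den x ^ 2).
  - rewrite sqrt_div_alt by nra; rewrite sqrt_pow2; lra.
  - unfold corr, ellipse_r2, Rsqr; field_simplify_eq; [|lra].
    unfold den; replace (sin x ^ 2) with (1 - cos x ^ 2)
      by (pose proof (sin2_cos2_pow x); lra); ring.
Qed.

Lemma cos_ellipse_angle x : cos (ellipse_angle p q x) = p * cos x / sqrt (ellipse_r2 p q x).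
Proof.
  unfold ellipse_angle; fold (den x) (corr x).
  rewrite cos_plus, cos_atan, sin_atan, sqrt_1_plus_corr2.
  assert (hd : 0 < den x) by now apply cos2_sin2_comb_pos.
  pose proof (sqrt_lt_R0 _ (ellipse_r2_pos p q x hp hq)).
  assert (E : cos x * den x - sin x * ((q - p) * sin x * cos x) = p * cos x).
  { unfold den; rewrite <- (Rmult_1_r (p * cos x)), <- (sin2_cos2_pow x); ring. }
  rewrite <- E; unfold corr; field; lra.
Qed.

Lemma sin_ellipse_angle x : sin (ellipse_angle p q x) = q * sin x / sqrt (ellipse_r2 p q x).
Proof.
  unfold ellipse_angle; fold (den x) (corr x).
  rewrite sin_plus, cos_atan, sin_atan, sqrt_1_plus_corr2.
  assert (hd : 0 < den x) by now apply cos2_sin2_comb_pos.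
  pose proof (sqrt_lt_R0 _ (ellipse_r2_pos p q x hp hq)).
  assert (E : sin x * den x + cos x * ((q - p) * sin x * cos x) = q * sin x).
  { unfold den; rewrite <- (Rmult_1_r (q * sin x)), <- (sin2_cos2_pow x); ring. }
  rewrite <- E; unfold corr; field; lra.
Qed.

Lemma is_derive_ellipse_angle x :
  is_derive (ellipse_angle p q) x (p * q / ellipse_r2 p q x).
Proof.
  assert (hd : 0 < den x) by now apply cos2_sin2_comb_pos.
  pose proof (ellipse_r2_pos p q x hp hq) as hr.
  pose proof (Rle_0_sqr (corr x)) as hc.
  unfold ellipse_angle, ellipse_r2, corr, den, Rsqr in *.
  auto_derive; [nra|].
  field_simplify_eq; [|repeat split; simpl in *; try lra; nra].
  set (A := p * q * (q ^ 2 * sin x ^ 2 + p ^ 2 * cos x ^ 2)).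
  transitivity (A * (sin x ^ 2 + cos x ^ 2) ^ 2); [unfold A; ring|].
  transitivity (A * (sin x ^ 2 + cos x ^ 2)); [rewrite sin2_cos2_pow; ring | unfold A; ring].
Qed.

Lemma continuous_ellipse_angle x : continuous (ellipse_angle p q) x.
Proof.
  apply (ex_derive_continuous (K := R_AbsRing) (V := R_NormedModule)).
  eexists; apply is_derive_ellipse_angle.
Qed.

Lemma continuous_ellipse_angle_derive x : continuous (fun y => p * q / ellipse_r2 p q y) x.
Proof.
  apply (ex_derive_continuous (K := R_AbsRing) (V := R_NormedModule)).
  pose proof (ellipse_r2_pos p q x hp hq); unfold ellipse_r2 in *.
  auto_derive; lra.
Qed.

Lemma is_RInt_ellipse_angle (f : R -> R) a b :
  sin a = 0 -> sin b = 0 -> (forall x, continuous f x) ->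
  is_RInt (fun y => p * q / ellipse_r2 p q y * f (ellipse_angle p q y)) a b (RInt f a b).
Proof.
  intros ha hb hf.
  rewrite <- (ellipse_angle_sin_0 p q a ha) at 2.
  rewrite <- (ellipse_angle_sin_0 p q b hb) at 2.
  apply (is_RInt_comp (V := R_CompleteNormedModule)); [intros; apply hf|].
  intros; split; [apply is_derive_ellipse_angle | apply continuous_ellipse_angle_derive].
Qed.
End EllipseAngle.

Definition continuity_2d (f : R -> R -> R) : Prop := forall x y, continuity_2d_pt f x y.

Lemma continuity_2d_pt_comp (h : R -> R) g x y :
  (forall z, continuity_pt h z) -> continuity_2d_pt g x y ->
  continuity_2d_pt (fun u v => h (g u v)) x y.
Proof. intros; now apply continuity_1d_2d_pt_comp. Qed.

Lemma continuity_2d_pt_pow g x y n :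
  continuity_2d_pt g x y -> continuity_2d_pt (fun u v => g u v ^ n) x y.
Proof.
  intros H; induction n as [|n IH]; simpl.
  - apply continuity_2d_pt_const.
  - now apply continuity_2d_pt_mult.
Qed.

Lemma continuity_2d_pt_comp2 f h1 h2 x y :
  continuity_2d_pt h1 x y -> continuity_2d_pt h2 x y ->
  continuity_2d_pt f (h1 x y) (h2 x y) ->
  continuity_2d_pt (fun u v => f (h1 u v) (h2 u v)) x y.
Proof.
  intros H1 H2 Hf eps.
  destruct (Hf eps) as [d Hd].
  destruct (H1 d) as [d1 Hd1]; destruct (H2 d) as [d2 Hd2].
  exists (mkposreal _ (Rmin_pos _ _ (cond_pos d1) (cond_pos d2))); simpl.
  intros u v hu hv.
  pose proof (Rmin_l d1 d2); pose proof (Rmin_r d1 d2).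
  apply Hd; [apply Hd1 | apply Hd2]; lra.
Qed.

Lemma continuity_pt_atan x : continuity_pt atan x.
Proof.
  apply continuity_pt_filterlim, (ex_derive_continuous (K := R_AbsRing) (V := R_NormedModule)).
  eexists; apply is_derive_atan.
Qed.

Lemma continuity_2d_pt_sqrt g x y :
  continuity_2d_pt g x y -> 0 < g x y -> continuity_2d_pt (fun u v => sqrt (g u v)) x y.
Proof. intros; apply continuity_1d_2d_pt_comp; auto; now apply sqrt_continuity_pt. Qed.

Ltac continuity_2d_tac :=
  repeat first
    [ apply continuity_2d_pt_plus | apply continuity_2d_pt_mult
    | apply continuity_2d_pt_minus | apply continuity_2d_pt_opp
    | apply continuity_2d_pt_id1 | apply continuity_2d_pt_id2
    | apply continuity_2d_pt_const | apply continuity_2d_pt_pow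
    | apply (continuity_2d_pt_comp sin _ _ _ continuity_sin)
    | apply (continuity_2d_pt_comp cos _ _ _ continuity_cos)
    | apply (continuity_2d_pt_comp atan _ _ _ continuity_pt_atan)
    | apply continuity_2d_pt_sqrt | apply continuity_2d_pt_inv ].

Section ParametricIntegrals.
Variable f : R -> R -> R.
Hypothesis Hf : continuity_2d f.

Lemma continuity_2d_swap : continuity_2d (fun u v => f v u).
Proof.
  intros x y eps; destruct (Hf y x eps) as [d Hd].
  exists d; intros u v h1 h2; now apply Hd.
Qed.

Lemma continuous_partial_r x y : continuous (fun v => f x v) y.
Proof.
  apply continuity_pt_filterlim; intros eps heps.
  destruct (Hf x y (mkposreal eps heps)) as [d Hd].
  exists d; split; [apply cond_pos|].
  intros v [_ hv]; simpl in *; unfold R_dist in *.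
  apply Hd; auto; rewrite Rminus_diag, Rabs_R0; apply cond_pos.
Qed.

Lemma ex_RInt_partial_r x c d : ex_RInt (fun v => f x v) c d.
Proof.
  apply (ex_RInt_continuous (V := R_CompleteNormedModule)); intros.
  apply continuous_partial_r.
Qed.

Lemma continuous_RInt_param_le c d x0 : c <= d ->
  continuity_pt (fun x => RInt (fun v => f x v) c d) x0.
Proof.
  intros hcd eps heps.
  assert (he : 0 < eps / (d - c + 1)) by (apply Rdiv_lt_0_compat; lra).
  destruct (uniform_continuity_2d f (x0 - 1) (x0 + 1) c d (fun x y _ _ => Hf x y)
              (mkposreal _ he)) as [del Hd].
  exists (Rmin del 1); split; [apply Rmin_pos; [apply cond_pos | lra]|].
  intros x [_ hx]; simpl in *; unfold R_dist in *.
  pose proof (Rmin_l del 1); pose proof (Rmin_r del 1).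
  rewrite <- (RInt_minus (V := R_CompleteNormedModule))
    by apply ex_RInt_partial_r.
  apply Rle_lt_trans with ((d - c) * (eps / (d - c + 1))).
  - apply abs_RInt_le_const; auto.
    + apply (ex_RInt_minus (V := R_NormedModule)); apply ex_RInt_partial_r.
    + intros t ht; apply Rlt_le, (Hd x0 t x t); try lra.
      * apply Rabs_lt_between' in hx; lra.
      * rewrite Rminus_diag, Rabs_R0; apply cond_pos.
  - apply Rmult_lt_reg_r with (d - c + 1); [lra|].
    field_simplify; nra.
Qed.

Lemma continuous_RInt_param c d x : continuous (fun x => RInt (fun v => f x v) c d) x.
Proof.
  apply continuity_pt_filterlim; destruct (Rle_dec c d).
  - now apply continuous_RInt_param_le.
  - apply (continuity_pt_ext (fun x => - RInt (fun v => f x v) d c)).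
    + intros; apply (opp_RInt_swap (V := R_CompleteNormedModule)), ex_RInt_partial_r.
    + apply continuity_pt_opp, continuous_RInt_param_le; lra.
Qed.
End ParametricIntegrals.

Lemma continuous_partial_l f x y : continuity_2d f -> continuous (fun u => f u y) x.
Proof. intros Hf; apply (continuous_partial_r _ (continuity_2d_swap f Hf)). Qed.

Section Fubini.
Variable f : R -> R -> R.
Hypothesis Hf : continuity_2d f.

Let Hf_swap := continuity_2d_swap f Hf.

Lemma Derive_RInt_upper a z v : Derive (fun u => RInt (fun x => f x v) a u) z = f z v.
Proof.
  apply (Derive_RInt (fun x => f x v) a z).
  - apply filter_forall; intros; apply (ex_RInt_partial_r _ Hf_swap).
  - apply (continuous_partial_r _ Hf_swap).
Qed.

Lemma is_derive_RInt_RInt_upper a c d z :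
  is_derive (fun z => RInt (fun y => RInt (fun x => f x y) a z) c d) z
            (RInt (fun y => f z y) c d).
Proof.
  rewrite <- (RInt_ext (fun y => Derive (fun u => RInt (fun x => f x y) a u) z))
    by (intros; apply Derive_RInt_upper).
  apply (is_derive_RInt_param (fun z y => RInt (fun x => f x y) a z)).
  - apply filter_forall; intros z0 t _; exists (f z0 t).
    apply (is_derive_RInt (fun x => f x t) (RInt (fun x => f x t) a) a).
    + apply filter_forall; intros.
      apply (RInt_correct (V := R_CompleteNormedModule)), (ex_RInt_partial_r _ Hf_swap).
    + apply (continuous_partial_r _ Hf_swap).
  - intros t _; apply continuity_2d_pt_ext with (f := f); [|apply Hf].
    intros; now rewrite Derive_RInt_upper.
  - apply filter_forall; intros y.
    apply (ex_RInt_continuous (V := R_CompleteNormedModule)); intros.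
    apply (continuous_RInt_param _ Hf_swap).
Qed.

Lemma RInt_exchange a b c d :
  RInt (fun x => RInt (fun y => f x y) c d) a b = RInt (fun y => RInt (fun x => f x y) a b) c d.
Proof.
  set (Q := fun z => RInt (fun y => RInt (fun x => f x y) a z) c d).
  assert (HI : is_RInt (fun x => RInt (fun y => f x y) c d) a b (minus (Q b) (Q a))).
  { apply is_RInt_derive; intros.
    - apply is_derive_RInt_RInt_upper.
    - now apply continuous_RInt_param. }
  rewrite (is_RInt_unique _ _ _ _ HI); unfold Q.
  rewrite (RInt_ext (fun y => RInt (fun x => f x y) a a) (fun _ => 0))
    by (intros; apply (RInt_point (V := R_CompleteNormedModule))).
  rewrite RInt_const; unfold minus, plus, opp, scal; simpl; unfold mult; simpl; ring.
Qed.
End Fubini.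

Lemma continuity_2d_pt_ellipse_angle p g h x y :
  0 < p -> 0 < g x y -> continuity_2d_pt g x y -> continuity_2d_pt h x y ->
  continuity_2d_pt (fun u v => ellipse_angle p (g u v) (h u v)) x y.
Proof.
  intros hp hg Hg Hh.
  apply (continuity_2d_pt_comp2 (fun q t => ellipse_angle p q t)); auto.
  unfold ellipse_angle, Rdiv; continuity_2d_tac.
  apply Rgt_not_eq, cos2_sin2_comb_pos; auto.
Qed.

Definition on_sphere (f : R -> R -> R -> R) (th ph : R) : R :=
  f (sph_x th ph) (sph_y th ph) (sph_z th ph).

Definition sphere_RInt (f : R -> R -> R -> R) : R :=
  RInt (fun th => RInt (fun ph => on_sphere f th ph) 0 (2 * PI) * sin th) 0 PI.

Lemma sph_norm2 th ph : sph_x th ph ^ 2 + sph_y th ph ^ 2 + sph_z th ph ^ 2 = 1.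
Proof.
  unfold sph_x, sph_y, sph_z.
  transitivity (sin th ^ 2 * (sin ph ^ 2 + cos ph ^ 2) + cos th ^ 2); [ring|].
  rewrite !sin2_cos2_pow, Rmult_1_r; apply sin2_cos2_pow.
Qed.

Lemma RInt_mult_r f a b k : ex_RInt f a b -> RInt (fun x => f x * k) a b = RInt f a b * k.
Proof.
  intros h; rewrite Rmult_comm.
  pose proof (RInt_scal (V := R_CompleteNormedModule) f a b k h) as E.
  unfold scal in E; simpl in E; unfold mult in E; simpl in E; rewrite <- E.
  apply RInt_ext; intros; apply Rmult_comm.
Qed.

Section SphereIntegral.
Variable f : R -> R -> R -> R.
Hypothesis Hf : continuity_2d (on_sphere f).

Lemma continuous_sphere_outer th :
  continuous (fun th => RInt (fun ph => on_sphere f th ph) 0 (2 * PI) * sin th) th.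
Proof.
  apply (continuous_mult (K := R_AbsRing)); [now apply continuous_RInt_param|].
  apply continuity_pt_filterlim, continuity_sin.
Qed.

Lemma ex_RInt_sphere_outer :
  ex_RInt (fun th => RInt (fun ph => on_sphere f th ph) 0 (2 * PI) * sin th) 0 PI.
Proof.
  apply (ex_RInt_continuous (V := R_CompleteNormedModule)); intros.
  apply continuous_sphere_outer.
Qed.

Lemma sphere_integral_RInt : sphere_integral f (sphere_RInt f).
Proof.
  exists (fun th => RInt (fun ph => on_sphere f th ph) 0 (2 * PI)); split.
  - intros th _.
    assert (E : ex_RInt (fun ph => on_sphere f th ph) 0 (2 * PI))
      by now apply ex_RInt_partial_r.
    exists (ex_RInt_Reals_0 _ _ _ E); now rewrite <- RInt_Reals.
  - exists (ex_RInt_Reals_0 _ _ _ ex_RInt_sphere_outer); now rewrite <- RInt_Reals.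
Qed.

Lemma sphere_RInt_gt_0 : (forall th ph, 0 < on_sphere f th ph) -> 0 < sphere_RInt f.
Proof.
  intros hpos; pose proof PI_RGT_0.
  apply RInt_gt_0; [lra| |intros; apply continuous_sphere_outer].
  intros th hth; apply Rmult_lt_0_compat; [|apply sin_gt_0; lra].
  apply RInt_gt_0; [lra|auto|intros; now apply continuous_partial_r].
Qed.
End SphereIntegral.

Lemma sphere_integral_unique f I : sphere_integral f I -> I = sphere_RInt f.
Proof.
  intros [g [Hg [pr Hi]]]; rewrite <- Hi, <- RInt_Reals.
  apply RInt_ext; intros x hx; pose proof PI_RGT_0.
  rewrite Rmin_left, Rmax_right in hx by lra.
  destruct (Hg x ltac:(lra)) as [pr2 H2]; rewrite <- H2, <- RInt_Reals; reflexivity.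
Qed.

Lemma sphere_RInt_ext f g :
  (forall th ph, on_sphere f th ph = on_sphere g th ph) -> sphere_RInt f = sphere_RInt g.
Proof.
  intros H; unfold sphere_RInt; apply RInt_ext; intros.
  f_equal; apply RInt_ext; auto.
Qed.

Lemma on_sphere_quadT2 s1 s2 s3 th ph :
  on_sphere (quadT2 s1 s2 s3) th ph = ellipse_r2 s3 (sqrt (ellipse_r2 s1 s2 ph)) th.
Proof.
  pose proof (ellipse_r2_ge_0 s1 s2 ph).
  unfold ellipse_r2 at 1; rewrite pow2_sqrt by auto.
  unfold on_sphere, quadT2, ellipse_r2, sph_x, sph_y, sph_z; ring.
Qed.

Lemma quadT2_Rabs t1 t2 t3 x y z :
  quadT2 (Rabs t1) (Rabs t2) (Rabs t3) x y z = quadT2 t1 t2 t3 x y z.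
Proof. unfold quadT2; now rewrite !pow2_abs. Qed.

Lemma on_sphere_quadT2_pos t1 t2 t3 th ph :
  t1 <> 0 -> t2 <> 0 -> t3 <> 0 -> 0 < on_sphere (quadT2 t1 t2 t3) th ph.
Proof.
  intros h1 h2 h3.
  replace (on_sphere (quadT2 t1 t2 t3) th ph)
    with (on_sphere (quadT2 (Rabs t1) (Rabs t2) (Rabs t3)) th ph) by apply quadT2_Rabs.
  rewrite on_sphere_quadT2.
  apply ellipse_r2_pos; [now apply Rabs_pos_lt|].
  apply sqrt_lt_R0, ellipse_r2_pos; now apply Rabs_pos_lt.
Qed.

(* [f] composed with the map n |-> S n / |S n| of the sphere, S = diag(s1,s2,s3),
   and multiplied by |S n|^-3: the Jacobian of that map is det S / |S n|^3. *)
Definition sphere_pullback (s1 s2 s3 : R) (f : R -> R -> R -> R) (x y z : R) : R :=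
  let r := sqrt (quadT2 s1 s2 s3 x y z) in
  f (s1 * x / r) (s2 * y / r) (s3 * z / r) / r ^ 3.

Section DiagonalChange.
Variables s1 s2 s3 : R.
Hypotheses (hs1 : 0 < s1) (hs2 : 0 < s2) (hs3 : 0 < s3).

Let rho ph := sqrt (ellipse_r2 s1 s2 ph).
Let r th ph := sqrt (on_sphere (quadT2 s1 s2 s3) th ph).
Let ph' ph := ellipse_angle s1 s2 ph.
Let th' th ph := ellipse_angle s3 (rho ph) th.

Lemma rho_pos ph : 0 < rho ph.
Proof. apply sqrt_lt_R0, ellipse_r2_pos; auto. Qed.

Lemma r_eq th ph : r th ph = sqrt (ellipse_r2 s3 (rho ph) th).
Proof. unfold r; now rewrite on_sphere_quadT2. Qed.

Lemma r_pos th ph : 0 < r th ph.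
Proof. apply sqrt_lt_R0, on_sphere_quadT2_pos; apply Rgt_not_eq; auto. Qed.

Lemma sph_transport th ph :
  sph_x (th' th ph) (ph' ph) = s1 * sph_x th ph / r th ph /\
  sph_y (th' th ph) (ph' ph) = s2 * sph_y th ph / r th ph /\
  sph_z (th' th ph) (ph' ph) = s3 * sph_z th ph / r th ph.
Proof.
  pose proof (rho_pos ph); pose proof (r_pos th ph).
  unfold sph_x, sph_y, sph_z, th', ph'.
  rewrite sin_ellipse_angle, cos_ellipse_angle, sin_ellipse_angle, cos_ellipse_angle
    by auto.
  fold (rho ph); rewrite <- r_eq.
  repeat split; field; split; lra.
Qed.

Lemma on_sphere_pullback g th ph :
  on_sphere (sphere_pullback s1 s2 s3 g) th ph = on_sphere g (th' th ph) (ph' ph) / r th ph ^ 3.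
Proof.
  destruct (sph_transport th ph) as [ex [ey ez]].
  unfold on_sphere at 2; rewrite ex, ey, ez; reflexivity.
Qed.

Lemma jacobian_transport th ph :
  s3 * rho ph / ellipse_r2 s3 (rho ph) th * (s1 * s2 / ellipse_r2 s1 s2 ph) * sin (th' th ph)
  = s1 * s2 * s3 * sin th / r th ph ^ 3.
Proof.
  pose proof (rho_pos ph); pose proof (r_pos th ph).
  unfold th'; rewrite sin_ellipse_angle by auto; rewrite <- r_eq.
  replace (ellipse_r2 s3 (rho ph) th) with (r th ph ^ 2)
    by (rewrite r_eq, pow2_sqrt; auto using ellipse_r2_ge_0).
  replace (ellipse_r2 s1 s2 ph) with (rho ph ^ 2)
    by (unfold rho; rewrite pow2_sqrt; auto using ellipse_r2_ge_0).
  field; split; lra.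
Qed.

Lemma continuity_2d_r : continuity_2d r.
Proof.
  intros th ph; unfold r, on_sphere, quadT2, sph_x, sph_y, sph_z; continuity_2d_tac.
  apply (on_sphere_quadT2_pos s1 s2 s3 th ph); apply Rgt_not_eq; auto.
Qed.

Variable f : R -> R -> R -> R.
Hypothesis Hf : continuity_2d (on_sphere f).

Let Fph th ph := s1 * s2 / ellipse_r2 s1 s2 ph * on_sphere f th (ph' ph) * sin th.

Lemma continuity_2d_Fph : continuity_2d Fph.
Proof.
  intros th ph; unfold Fph, Rdiv, ellipse_r2.
  apply continuity_2d_pt_mult; [apply continuity_2d_pt_mult|continuity_2d_tac].
  - continuity_2d_tac; apply Rgt_not_eq, ellipse_r2_pos; auto.
  - apply (continuity_2d_pt_comp2 (on_sphere f)); [continuity_2d_tac| |apply Hf].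
    apply (continuity_2d_pt_comp (ph')), continuity_2d_pt_id2.
    intros z; apply continuity_pt_filterlim, continuous_ellipse_angle; auto.
Qed.

Lemma continuity_2d_pullback : continuity_2d (on_sphere (sphere_pullback s1 s2 s3 f)).
Proof.
  intros th ph.
  apply continuity_2d_pt_ext with (fun u v => on_sphere f (th' u v) (ph' v) * / r u v ^ 3).
  { intros; now rewrite on_sphere_pullback. }
  apply continuity_2d_pt_mult.
  - apply (continuity_2d_pt_comp2 (on_sphere f)); [| |apply Hf].
    + apply continuity_2d_pt_ellipse_angle; auto using rho_pos, continuity_2d_pt_id1.
      unfold rho, ellipse_r2; continuity_2d_tac; apply ellipse_r2_pos; auto.
    + apply (continuity_2d_pt_comp (ph')), continuity_2d_pt_id2.
      intros z; apply continuity_pt_filterlim, continuous_ellipse_angle; auto.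
  - apply continuity_2d_pt_inv; [apply continuity_2d_pt_pow, continuity_2d_r|].
    apply pow_nonzero, Rgt_not_eq, r_pos.
Qed.

Lemma RInt_phi_transport th :
  RInt (fun ph => on_sphere f th ph) 0 (2 * PI) * sin th = RInt (fun ph => Fph th ph) 0 (2 * PI).
Proof.
  pose proof (is_RInt_ellipse_angle s1 s2 hs1 hs2 (fun ph => on_sphere f th ph) 0 (2 * PI)
                sin_0 sin_2PI (fun ph => continuous_partial_r _ Hf th ph)) as E.
  rewrite <- (is_RInt_unique _ _ _ _ E), <- RInt_mult_r by (eexists; exact E).
  apply RInt_ext; intros; reflexivity.
Qed.

Lemma RInt_theta_transport ph :
  RInt (fun th => Fph th ph) 0 PI
  = RInt (fun th => on_sphere (sphere_pullback s1 s2 s3 f) th ph * (s1 * s2 * s3 * sin th)) 0 PI.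
Proof.
  pose proof (is_RInt_ellipse_angle s3 (rho ph) hs3 (rho_pos ph) (fun th => Fph th ph) 0 PI
                sin_0 sin_PI (fun th => continuous_partial_l _ th ph continuity_2d_Fph)) as E.
  rewrite <- (is_RInt_unique _ _ _ _ E).
  apply RInt_ext; intros th _; simpl.
  rewrite on_sphere_pullback; unfold Fph.
  transitivity (on_sphere f (th' th ph) (ph' ph) *
    (s3 * rho ph / ellipse_r2 s3 (rho ph) th * (s1 * s2 / ellipse_r2 s1 s2 ph)
     * sin (th' th ph))); [unfold th'; ring|].
  rewrite jacobian_transport; pose proof (r_pos th ph).
  field; lra.
Qed.

Lemma sphere_RInt_diag_change :
  sphere_RInt f = s1 * s2 * s3 * sphere_RInt (sphere_pullback s1 s2 s3 f).
Proof.
  unfold sphere_RInt.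
  rewrite (RInt_ext _ (fun th => RInt (fun ph => Fph th ph) 0 (2 * PI)))
    by (intros; apply RInt_phi_transport).
  rewrite (RInt_exchange Fph continuity_2d_Fph).
  rewrite (RInt_ext _ _ 0 (2 * PI) (fun ph _ => RInt_theta_transport ph)).
  set (P := on_sphere (sphere_pullback s1 s2 s3 f)).
  rewrite <- (RInt_exchange (fun th ph => P th ph * (s1 * s2 * s3 * sin th))).
  2: { intros th ph; apply continuity_2d_pt_mult;
       [apply continuity_2d_pullback | continuity_2d_tac]. }
  rewrite (RInt_ext _ (fun th => RInt (P th) 0 (2 * PI) * sin th * (s1 * s2 * s3))).
  - rewrite RInt_mult_r by (apply ex_RInt_sphere_outer, continuity_2d_pullback); apply Rmult_comm.
  - intros th _; rewrite RInt_mult_r by (apply ex_RInt_partial_r, continuity_2d_pullback).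
    set (A := RInt (P th) 0 (2 * PI)).
    change (A * (s1 * s2 * s3 * sin th) = A * sin th * (s1 * s2 * s3)); ring.
Qed.
End DiagonalChange.

Section QuadraticForms.
Variables t1 t2 t3 : R.
Hypotheses (ht1 : t1 <> 0) (ht2 : t2 <> 0) (ht3 : t3 <> 0).

Lemma quadTm2_inv x y z : quadTm2 t1 t2 t3 x y z = quadT2 (/ t1) (/ t2) (/ t3) x y z.
Proof. unfold quadTm2, quadT2; field; auto. Qed.

Lemma continuity_2d_inv_quadTm2_sq :
  continuity_2d (on_sphere (fun x y z => / quadTm2 t1 t2 t3 x y z ^ 2)).
Proof.
  intros th ph.
  apply continuity_2d_pt_ext with (fun u v => / on_sphere (quadT2 (/ t1) (/ t2) (/ t3)) u v ^ 2).
  { intros; unfold on_sphere; now rewrite quadTm2_inv. }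
  unfold on_sphere, quadT2, sph_x, sph_y, sph_z; continuity_2d_tac.
  apply pow_nonzero, Rgt_not_eq, (on_sphere_quadT2_pos _ _ _ th ph); now apply Rinv_neq_0_compat.
Qed.

Lemma continuity_2d_sqrt_quadT2 : continuity_2d (on_sphere (fun x y z => sqrt (quadT2 t1 t2 t3 x y z))).
Proof.
  intros th ph; unfold on_sphere, quadT2, sph_x, sph_y, sph_z; continuity_2d_tac.
  apply (on_sphere_quadT2_pos _ _ _ th ph); auto.
Qed.

(* With S = |T| one has (S n)^T T^-2 (S n) = |n|^2 = 1 on the sphere. *)
Lemma pullback_inv_quadTm2_sq th ph :
  on_sphere (sphere_pullback (Rabs t1) (Rabs t2) (Rabs t3)
               (fun x y z => / quadTm2 t1 t2 t3 x y z ^ 2)) th ph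
  = on_sphere (fun x y z => sqrt (quadT2 t1 t2 t3 x y z)) th ph.
Proof.
  unfold on_sphere, sphere_pullback; cbv zeta; rewrite quadT2_Rabs.
  pose proof (sph_norm2 th ph) as hn.
  pose proof (sqrt_lt_R0 _ (on_sphere_quadT2_pos _ _ _ th ph ht1 ht2 ht3)) as hr.
  unfold on_sphere in hr.
  set (r := sqrt (quadT2 t1 t2 t3 (sph_x th ph) (sph_y th ph) (sph_z th ph))) in *.
  assert (hq : quadTm2 t1 t2 t3 (Rabs t1 * sph_x th ph / r) (Rabs t2 * sph_y th ph / r)
                 (Rabs t3 * sph_z th ph / r) = / r ^ 2).
  { unfold quadTm2; rewrite <- (pow2_abs t1), <- (pow2_abs t2), <- (pow2_abs t3).
    transitivity ((sph_x th ph ^ 2 + sph_y th ph ^ 2 + sph_z th ph ^ 2) / r ^ 2).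
    - field; repeat split; try lra; now apply Rabs_no_R0.
    - rewrite hn; field; lra. }
  rewrite hq; field; lra.
Qed.

Lemma sphere_RInt_inv_quadTm2_sq :
  sphere_RInt (fun x y z => / quadTm2 t1 t2 t3 x y z ^ 2)
  = absdetT t1 t2 t3 * sphere_RInt (fun x y z => sqrt (quadT2 t1 t2 t3 x y z)).
Proof.
  rewrite (sphere_RInt_diag_change (Rabs t1) (Rabs t2) (Rabs t3)); try now apply Rabs_pos_lt.
  - unfold absdetT; rewrite !Rabs_mult; f_equal.
    apply sphere_RInt_ext, pullback_inv_quadTm2_sq.
  - apply continuity_2d_inv_quadTm2_sq.
Qed.
End QuadraticForms.

Theorem mainTheorem2 (t1 t2 t3 : R) (hT : t1 * t2 * t3 <> 0) :
  (exists I1, sphere_integral (fun x y z => / (quadTm2 t1 t2 t3 x y z) ^ 2) I1)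
  /\ (exists I2, sphere_integral (fun x y z => sqrt (quadT2 t1 t2 t3 x y z)) I2)
  /\ (forall I1 I2 : R,
        sphere_integral (fun x y z => / (quadTm2 t1 t2 t3 x y z) ^ 2) I1 ->
        sphere_integral (fun x y z => sqrt (quadT2 t1 t2 t3 x y z)) I2 ->
        let NT := / I1 in
        0 < NT
        /\ NT * absdetT t1 t2 t3 * I2 = 1
        /\ (2 * PI * NT * absdetT t1 t2 t3 = 1 <-> I2 = 2 * PI)).
Proof.
  destruct (Rmult_neq_0_reg _ _ hT) as [h12 h3].
  destruct (Rmult_neq_0_reg _ _ h12) as [h1 h2].
  split; [|split].
  - eexists; apply sphere_integral_RInt, continuity_2d_inv_quadTm2_sq; auto.
  - eexists; apply sphere_integral_RInt, continuity_2d_sqrt_quadT2; auto.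
  - intros I1 I2 HI1 HI2 NT.
    apply sphere_integral_unique in HI1; apply sphere_integral_unique in HI2.
    rewrite sphere_RInt_inv_quadTm2_sq, <- HI2 in HI1 by auto.
    assert (hI2 : 0 < I2).
    { rewrite HI2; apply sphere_RInt_gt_0; [now apply continuity_2d_sqrt_quadT2|].
      intros; apply sqrt_lt_R0, on_sphere_quadT2_pos; auto. }
    assert (hdet : 0 < absdetT t1 t2 t3) by now apply Rabs_pos_lt.
    unfold NT; subst I1; pose proof PI_RGT_0.
    split; [|split].
    + apply Rinv_0_lt_compat, Rmult_lt_0_compat; auto.
    + field; lra.
    + replace (2 * PI * / (absdetT t1 t2 t3 * I2) * absdetT t1 t2 t3) with (2 * PI / I2)
        by (field; lra).
      split; intros E.
      * apply (Rmult_eq_compat_r I2) in E; unfold Rdiv in E.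
        rewrite Rmult_assoc, Rinv_l in E by lra; lra.
      * rewrite E; field; lra.
Qed.
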